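(* Let $G$ be a graph, $U\subseteq V(G)$, and let $P$ be a path $v\,v_2\,v_3\,v_4$ on four new vertices (so $P\cong P_4$ and $v$ is an end vertex). Let $H$ be the graph with $V(H)=V(G)\cup V(P)$ and $E(H)=E(G)\cup E(P)\cup\{uv: u\in U\}$. Then $\overline{H}$ is $N$-AW if and only if $\overline{G\cup P_4}$ is $N$-AW (where $G\cup P_4$ is the disjoint union of $G$ and $P$).
   Context: All graphs are finite and simple; $\overline{X}$ denotes the complement. Labels lie in $\mathbb{Z}_\ell$ for a fixed integer $\ell\ge2$. In the neighborhood Lights Out game on a graph, toggling a vertex $w$ adds $1$ (mod $\ell$) to the label of every vertex in the closed neighborhood $N[w]$; the game is won when all labels are $0$. A graph is $N$-AW if this game can be won from every initial labeling. *)

From mathcomp Require Import all_boot all_algebra.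
Set Implicit Arguments. Unset Strict Implicit. Unset Printing Implicit Defensive.
Import GRing.Theory.
Local Open Scope ring_scope.

Definition simple_graph (T : finType) (e : rel T) : Prop :=
  symmetric e /\ irreflexive e.

Definition compl (T : finType) (e : rel T) : rel T :=
  fun x y => (x != y) && ~~ e x y.

Definition in_closed_nbhd (T : finType) (e : rel T) (w x : T) : bool :=
  (x == w) || e w x.

(* N-AW over Z_l: from every initial labeling a : T -> Z_l there is a
   sequence of toggles winning the game; since toggles commute, a sequence
   of toggles is recorded by the number of times t w each vertex w is
   toggled.  Toggling w adds 1 to every label in N[w]. *)
Definition N_AW (l : nat) (T : finType) (e : rel T) : Prop :=
  forall a : T -> 'Z_l, exists t : T -> nat,
    forall x : T, a x + \sum_(w : T | in_closed_nbhd e w x) (t w)%:R = 0.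

(* The path P_4 on vertices 0 - 1 - 2 - 3 (vertex 0 is the end vertex v). *)
Definition path4 : rel 'I_4 :=
  fun i j => (i.+1 == j :> nat) || (j.+1 == i :> nat).

Definition union_P4 (T : finType) (e : rel T) : rel (T + 'I_4) :=
  fun x y => match x, y with
             | inl a, inl b => e a b
             | inr i, inr j => path4 i j
             | _, _ => false
             end.

Definition H_graph (T : finType) (e : rel T) (U : {set T}) : rel (T + 'I_4) :=
  fun x y => match x, y with
             | inl a, inl b => e a b
             | inr i, inr j => path4 i j
             | inl u, inr i => (u \in U) && (val i == 0%N)
             | inr i, inl u => (u \in U) && (val i == 0%N)
             end.

From mathcomp Require Import all_boot all_algebra ring.
Set Implicit Arguments. Unset Strict Implicit. Unset Printing Implicit Defensive.
Import GRing.Theory.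
Local Open Scope ring_scope.

(* Winning from every labeling means the toggle map t |-> (sum of t over the
   toggles reaching x)_x is onto; as it is an additive self-map of the finite
   group Z_l^V, this is the same as having trivial kernel.  In the complement
   of H, a kernel element t with graph part x must vanish at the end vertex v
   (compare the rows of v_2 and v_4), and the rows of the vertices of G then
   say that the toggle map of the complement of G sends x to the constant
   2 (sum x); conversely every such x extends to a kernel element.  Hence the
   kernel is trivial iff the only such x is 0, a condition that does not
   involve U, and G \cup P_4 is the case U = set0. *)

Lemma onto_inj (T : finType) (f : T -> T) :
  (forall y, exists x, f x = y) -> injective f.
Proof.
move=> f_onto; apply: in2T; apply/image_injP/eqP/eq_card => y.
by have [x <-] := f_onto y; rewrite image_f.
Qed.

Section TogglesKernel.
Variables (l : nat) (V : finType) (e : rel V).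
Local Notation Z := 'Z_l.

Definition toggle_effect (t : {ffun V -> Z}) : {ffun V -> Z} :=
  [ffun x => \sum_(w | in_closed_nbhd e w x) t w].

Lemma toggle_effect0 : toggle_effect 0 = 0.
Proof. by apply/ffunP => x; rewrite !ffunE big1 // => w _; rewrite ffunE. Qed.

Lemma toggle_effectB t1 t2 :
  toggle_effect (t1 - t2) = toggle_effect t1 - toggle_effect t2.
Proof.
by apply/ffunP => x; rewrite !ffunE -sumrB; apply: eq_bigr => w _; rewrite !ffunE.
Qed.

Lemma N_AW_toggle_effect_onto :
  N_AW l e <-> forall b, exists t, toggle_effect t = b.
Proof.
split=> [winnable b | onto a].
  have [n win] := winnable (fun x => - b x).
  exists [ffun w => (n w)%:R]; apply/ffunP => x; apply/eqP.
  rewrite ffunE -[b x]opprK -addr_eq0 addrC.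
  under eq_bigr => w _ do rewrite ffunE.
  by rewrite win.
have [t tE] := onto [ffun x => - a x].
exists (fun w => nat_of_ord (t w)) => x.
under eq_bigr => w _ do rewrite natr_Zp.
by move/ffunP/(_ x): tE; rewrite !ffunE => ->; rewrite subrr.
Qed.

Lemma N_AW_kernel : N_AW l e <-> forall t, toggle_effect t = 0 -> t = 0.
Proof.
rewrite N_AW_toggle_effect_onto; split=> [onto t t0 | ker b].
  by apply: (onto_inj onto); rewrite t0 toggle_effect0.
have toggle_inj : injective toggle_effect.
  move=> t1 t2 /eqP; rewrite -subr_eq0 -toggle_effectB => /eqP/ker/eqP.
  by rewrite subr_eq0 => /eqP.
by have /codomP[t ->] := injF_onto toggle_inj b; exists t.
Qed.

Lemma N_AW_eq2 (e' : rel V) : e =2 e' -> N_AW l e <-> N_AW l e'.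
Proof.
move=> ee'; split=> winnable a; have [n win] := winnable a; exists n => x.
  by under eq_bigl => w do rewrite /in_closed_nbhd -ee'; apply: win.
by under eq_bigl => w do rewrite /in_closed_nbhd ee'; apply: win.
Qed.

End TogglesKernel.

Definition o0 : 'I_4 := @Ordinal 4 0 isT.
Definition o1 : 'I_4 := @Ordinal 4 1 isT.
Definition o2 : 'I_4 := @Ordinal 4 2 isT.
Definition o3 : 'I_4 := @Ordinal 4 3 isT.

Lemma ord4P (j : 'I_4) : [\/ j = o0, j = o1, j = o2 | j = o3].
Proof.
case: j => [[|[|[|[|j]]]] lt_j4] //.
- by constructor 1; apply/val_inj.
- by constructor 2; apply/val_inj.
- by constructor 3; apply/val_inj.
- by constructor 4; apply/val_inj.
Qed.

Lemma big_ord4_cond (R : nmodType) (P : pred 'I_4) (F : 'I_4 -> R) :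
  \sum_(j | P j) F j = (if P o0 then F o0 else 0) + (if P o1 then F o1 else 0)
    + (if P o2 then F o2 else 0) + (if P o3 then F o3 else 0).
Proof.
rewrite big_mkcond !big_ord_recl big_ord0 /= addr0 !addrA.
by congr (_ + _ + _ + _); congr (if P _ then F _ else 0); apply/val_inj.
Qed.

Section ComplementOfH.
Variables (l : nat) (T : finType) (e : rel T).
Local Notation Z := 'Z_l.

Definition twice_total_trivial := forall x : {ffun T -> Z},
  (forall u, toggle_effect (compl e) x u = (\sum_w x w) *+ 2) -> x = 0.

Variable U : {set T}.
Local Notation toggleH := (@toggle_effect l _ (compl (H_graph e U))).

Definition graph_part (t : {ffun T + 'I_4 -> Z}) : {ffun T -> Z} :=
  [ffun w => t (inl w)].

Lemma toggleH_inl t u : toggleH t (inl u) =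
  toggle_effect (compl e) (graph_part t) u
  + ((if u \in U then 0 else t (inr o0)) + t (inr o1) + t (inr o2) + t (inr o3)).
Proof.
rewrite !ffunE big_sumType; congr (_ + _).
  by apply: eq_bigr => w _; rewrite ffunE.
by rewrite big_ord4_cond /in_closed_nbhd /compl /=; case: (u \in U).
Qed.

Lemma toggleH_inr (t : {ffun T + 'I_4 -> Z}) (s := \sum_w t (inl w)) :
  [/\ toggleH t (inr o0) = \sum_(w | w \notin U) t (inl w) + t (inr o0) + t (inr o2) + t (inr o3),
      toggleH t (inr o1) = s + t (inr o1) + t (inr o3),
      toggleH t (inr o2) = s + t (inr o0) + t (inr o2) &
      toggleH t (inr o3) = s + t (inr o0) + t (inr o1) + t (inr o3)].
Proof.
have inl_part j :
    \sum_(w | in_closed_nbhd (compl (H_graph e U)) (inl w) (inr j)) t (inl w)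
    = \sum_(w | (val j != 0%N) || (w \notin U)) t (inl w).
  by apply: eq_bigl => w; rewrite /in_closed_nbhd /compl /= negb_and orbC.
split; rewrite ffunE big_sumType /= inl_part big_ord4_cond /in_closed_nbhd /compl /=;
  by rewrite ?addr0 ?add0r !addrA.
Qed.

Lemma toggleH_kernel0_of_twice_total_trivial :
  twice_total_trivial -> forall t, toggleH t = 0 -> t = 0.
Proof.
move=> rigid t t0; have row z : 0 = toggleH t z by rewrite t0 ffunE.
set s := \sum_w t (inl w).
have [r0 r1 r2 r3] := toggleH_inr t; rewrite -!row -/s in r0 r1 r2 r3.
have a0 : t (inr o0) = 0.
  have -> : t (inr o0) = (s + t (inr o0) + t (inr o1) + t (inr o3))
                         - (s + t (inr o1) + t (inr o3)) by ring.
  by rewrite -r1 -r3 subrr.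
have x0 : graph_part t = 0.
  apply: rigid => u.
  have -> : \sum_w graph_part t w = s by apply: eq_bigr => w _; rewrite ffunE.
  have := toggleH_inl t u; rewrite -row a0 if_same.
  set X := toggle_effect _ _ u => ru.
  have -> : X = X + (0 + t (inr o1) + t (inr o2) + t (inr o3))
              - (s + t (inr o1) + t (inr o3)) - (s + 0 + t (inr o2)) + s *+ 2 by ring.
  by rewrite -ru -r1 -a0 -r2; ring.
have inl0 w : t (inl w) = 0 by move/ffunP/(_ w): x0; rewrite !ffunE.
have s0 : s = 0 by apply: big1 => w _.
rewrite big1 // s0 a0 !add0r ?addr0 in r0 r1 r2.
rewrite -r2 add0r in r0; rewrite -r0 addr0 in r1.
apply/ffunP => -[w | j]; rewrite ffunE ?inl0 //.
by case: (ord4P j) => ->; [exact: a0 | exact: esym r1 | exact: esym r2 | exact: esym r0].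
Qed.

Lemma twice_total_trivial_of_toggleH_kernel0 :
  (forall t, toggleH t = 0 -> t = 0) -> twice_total_trivial.
Proof.
move=> ker x x_rows.
set s := \sum_w x w; set sU := \sum_(w in U) x w.
(* the solution of the four path rows once x is fixed *)
pose tail (j : 'I_4) : Z := [:: 0; - s - sU; - s; sU]`_j.
pose t : {ffun T + 'I_4 -> Z} :=
  [ffun z => match z with inl w => x w | inr j => tail j end].
have tx : graph_part t = x by apply/ffunP => w; rewrite !ffunE.
have ts : \sum_w t (inl w) = s by apply: eq_bigr => w _; rewrite ffunE.
have tsN : \sum_(w | w \notin U) t (inl w) = s - sU.
  rewrite [s](bigID (mem U)) /= -/sU addrAC subrr add0r.
  by apply: eq_bigr => w _; rewrite ffunE.
suff /ker t0 : toggleH t = 0 by rewrite -tx t0; apply/ffunP => w; rewrite !ffunE.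
have [r0 r1 r2 r3] := toggleH_inr t.
apply/ffunP => -[u | j]; rewrite [RHS]ffunE.
  by rewrite toggleH_inl tx x_rows -/s !ffunE /= if_same /tail /=; ring.
by case: (ord4P j) => ->; rewrite ?r0 ?r1 ?r2 ?r3 ?ts ?tsN !ffunE /tail /=; ring.
Qed.

Lemma N_AW_compl_H_graph :
  N_AW l (compl (H_graph e U)) <-> twice_total_trivial.
Proof.
split=> [/N_AW_kernel | rigid]; first exact: twice_total_trivial_of_toggleH_kernel0.
by apply/N_AW_kernel; apply: toggleH_kernel0_of_twice_total_trivial.
Qed.

End ComplementOfH.

Lemma union_P4_H_graph0 (T : finType) (e : rel T) : union_P4 e =2 H_graph e set0.
Proof. by case=> [u|i] [w|j] //=; rewrite inE. Qed.

Lemma N_AW_compl_union_P4 (l : nat) (T : finType) (e : rel T) :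
  N_AW l (compl (union_P4 e)) <-> twice_total_trivial l e.
Proof.
apply: iff_trans (N_AW_compl_H_graph l e set0).
by apply: N_AW_eq2 => x y; rewrite /compl union_P4_H_graph0.
Qed.

Theorem theorem3p1 (l : nat) (hl : (1 < l)%N) (T : finType) (e : rel T)
  (hG : simple_graph e) (U : {set T}) :
  N_AW l (compl (H_graph e U)) <-> N_AW l (compl (union_P4 e)).
Proof.
exact: iff_trans (N_AW_compl_H_graph l e U) (iff_sym (N_AW_compl_union_P4 l e)).
Qed.
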